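(* Let $C$ be a parity complex. For every $x\in C$, the sets $x^+$ and $x^-$ are tight.
   Context: A parity complex consists of a set $C=\bigsqcup_{n\ge 0}C_n$ graded by dimension, together with, for each $n\ge 0$ and each $x\in C_{n+1}$, two disjoint, non-empty, finite subsets $x^-,x^+\subseteq C_n$ (for $x\in C_0$ put $x^-=x^+=\emptyset$), subject to Axioms 1, 2, 3A, 3B below. Notation: for $S\subseteq C$, $S^-=\bigcup_{w\in S}w^-$, $S^+=\bigcup_{w\in S}w^+$, $S^\pm=S^+\setminus S^-$; $x^{-+}=(x^-)^+$, etc. For $S,T\subseteq C$ write $S\perp T$ when $S^-\cap T^-=\emptyset$ and $S^+\cap T^+=\emptyset$; $x\perp y$ means $\{x\}\perp\{y\}$. With $S_n=S\cap C_n$, a set $S$ is well-formed when $S_0$ has at most one element and for every $n>0$ and all distinct $x,y\in S_n$, $x\perp y$. Write $x<y$ when $x^+\cap y^-\neq\emptyset$, and let $\lhd$ be the reflexive transitive closure of $<$. Axioms: (1) for all $x$, $x^{++}\cup x^{--}=x^{-+}\cup x^{+-}$; (2) for all $x$, $x^-$ and $x^+$ are well-formed; (3A) $x\lhd y$ and $y\lhd x$ imply $x=y$; (3B) if $x\lhd y$ then there is no $z$ with $x\in z^+$ and $y\in z^-$, and no $z$ with $y\in z^+$ and $x\in z^-$. A set $R\subseteq C$ is tight when for all $u,v\in C$, if $u\lhd v$ and $v\in R$ then $u^-\cap R^\pm=\emptyset$. *)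

From Stdlib Require Import List Relations.

Set Implicit Arguments.

Section ParityDefs.
Variable T : Type.
Variable dim : T -> nat.
(* minus x y  means  y \in x^- ;  plus x y  means  y \in x^+ *)
Variable minus plus : T -> T -> Prop.

Definition set_finite (S : T -> Prop) : Prop :=
  exists l : list T, forall y, S y -> In y l.

Definition setM (S : T -> Prop) : T -> Prop := fun z => exists w, S w /\ minus w z.
Definition setP (S : T -> Prop) : T -> Prop := fun z => exists w, S w /\ plus w z.
Definition setPM (S : T -> Prop) : T -> Prop := fun z => setP S z /\ ~ setM S z.

Definition single (x : T) : T -> Prop := fun y => y = x.

Definition perp (S R : T -> Prop) : Prop :=
  (forall z, ~ (setM S z /\ setM R z)) /\ (forall z, ~ (setP S z /\ setP R z)).

Definition well_formed (S : T -> Prop) : Prop :=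
  (forall x y, S x -> S y -> dim x = 0 -> dim y = 0 -> x = y) /\
  (forall x y, S x -> S y -> dim x = dim y -> 0 < dim x -> x <> y ->
     perp (single x) (single y)).

Definition pc_lt (x y : T) : Prop := exists z, plus x z /\ minus y z.
Definition pc_lhd : T -> T -> Prop := clos_refl_trans T pc_lt.

Definition tight (R : T -> Prop) : Prop :=
  forall u v, pc_lhd u v -> R v ->
    forall z, minus u z -> ~ setPM R z.

End ParityDefs.

Record parity_complex := {
  pc_carrier : Type;
  pc_dim : pc_carrier -> nat;
  pc_minus : pc_carrier -> pc_carrier -> Prop;
  pc_plus : pc_carrier -> pc_carrier -> Prop;
  pc_minus_dim : forall x y, pc_minus x y -> pc_dim x = S (pc_dim y);
  pc_plus_dim : forall x y, pc_plus x y -> pc_dim x = S (pc_dim y);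
  pc_minus_ne : forall x, 0 < pc_dim x -> exists y, pc_minus x y;
  pc_plus_ne : forall x, 0 < pc_dim x -> exists y, pc_plus x y;
  pc_minus_fin : forall x, set_finite (pc_minus x);
  pc_plus_fin : forall x, set_finite (pc_plus x);
  pc_disj : forall x y, ~ (pc_minus x y /\ pc_plus x y);
  pc_ax1 : forall x z,
    (setP pc_plus (pc_plus x) z \/ setM pc_minus (pc_minus x) z) <->
    (setP pc_plus (pc_minus x) z \/ setM pc_minus (pc_plus x) z);
  pc_ax2 : forall x, well_formed pc_dim pc_minus pc_plus (pc_minus x) /\
                     well_formed pc_dim pc_minus pc_plus (pc_plus x);
  pc_ax3A : forall x y, pc_lhd pc_minus pc_plus x y ->
                        pc_lhd pc_minus pc_plus y x -> x = y;
  pc_ax3B : forall x y, pc_lhd pc_minus pc_plus x y ->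
    (~ exists z, pc_plus z x /\ pc_minus z y) /\
    (~ exists z, pc_plus z y /\ pc_minus z x)
}.

(** If [z] lay in both [u^-] and [R^∓] for [R = x^+], Axiom 1 would put [z] in
    [w^+] for some [w] in [x^-]; then [w < u ⊲ v] with [v] in [x^+], which
    Axiom 3B forbids.  The case [R = x^-] is symmetric. *)

From Stdlib Require Import Relations.

Section Tightness.
Variable T : Type.
Variables minus plus : T -> T -> Prop.

Lemma pc_lt_lhd_trans (w u v : T) :
  pc_lt minus plus w u -> pc_lhd minus plus u v -> pc_lhd minus plus w v.
Proof.
  intros Hwu Huv. apply rt_trans with u; [apply rt_step; exact Hwu | exact Huv].
Qed.

Lemma tight_of_setPM_covered (R S : T -> Prop) :
  (forall z, setPM minus plus R z -> setP plus S z) ->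
  (forall w v, S w -> R v -> ~ pc_lhd minus plus w v) ->
  tight minus plus R.
Proof.
  intros Hcover Hnot u v Huv Hv z Hz HzR.
  destruct (Hcover z HzR) as [w [Hw Hwz]].
  apply (Hnot w v Hw Hv).
  apply pc_lt_lhd_trans with u; [exists z; split; assumption | exact Huv].
Qed.

End Tightness.

Section ParityComplex.
Variable C : parity_complex.

Notation minus := (pc_minus C).
Notation plus := (pc_plus C).

Lemma setPM_plus_sub_setP_minus (x z : pc_carrier C) :
  setPM minus plus (plus x) z -> setP plus (minus x) z.
Proof.
  intros [Hpp Hnm].
  destruct (proj1 (pc_ax1 C x z) (or_introl Hpp)) as [Hmp | Hpm];
    [exact Hmp | contradiction].
Qed.

Lemma setPM_minus_sub_setP_plus (x z : pc_carrier C) :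
  setPM minus plus (minus x) z -> setP plus (plus x) z.
Proof.
  intros [Hmp Hmm].
  destruct (proj2 (pc_ax1 C x z) (or_introl Hmp)) as [Hpp | Hmm'];
    [exact Hpp | contradiction].
Qed.

Lemma not_lhd_minus_plus (x w v : pc_carrier C) :
  minus x w -> plus x v -> ~ pc_lhd minus plus w v.
Proof.
  intros Hw Hv Hwv. apply (proj2 (pc_ax3B C Hwv)). exists x. split; assumption.
Qed.

Lemma not_lhd_plus_minus (x w v : pc_carrier C) :
  plus x w -> minus x v -> ~ pc_lhd minus plus w v.
Proof.
  intros Hw Hv Hwv. apply (proj1 (pc_ax3B C Hwv)). exists x. split; assumption.
Qed.

End ParityComplex.

Theorem mainTheorem5 (C : parity_complex) (x : pc_carrier C) :
  tight (pc_minus C) (pc_plus C) (pc_plus C x) /\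
  tight (pc_minus C) (pc_plus C) (pc_minus C x).
Proof.
  split.
  - apply tight_of_setPM_covered with (S := pc_minus C x).
    + apply setPM_plus_sub_setP_minus.
    + intros w v. apply not_lhd_minus_plus.
  - apply tight_of_setPM_covered with (S := pc_plus C x).
    + apply setPM_minus_sub_setP_plus.
    + intros w v. apply not_lhd_plus_minus.
Qed.
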